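(* Let $g$ be a positive integer, let $l\ge1$, and let $(a,a+g)$ be a consecutive prospective prime pair with gap $g$ in $S_l$. Let $k>l+4$, $0\le m\le P_{k-1}-1$ and $0\le m'\le P_k-1$. Then the number of tuples $(m_{l+1},\dots,m_k)$ of integers with $0\le m_j\le P_j-1$, $m_{k-1}=m$ and $m_k=m'$ such that, with $M=\sum_{j=l+1}^km_jP_{j-1}\#$, both $a+M$ and $a+g+M$ are coprime to $P_k\#$ (i.e. the number of pairs with gap $g$ in the subset $S_k^{(m')}$ generated from the pairs derived from $(a,a+g)$ in the subset $S_{k-1}^{(m)}$) is at least $(P_{k-2}-6)\,\mathring{n}^g_{k-3}$.
   Context: $P_k$ denotes the $k$-th prime ($P_1=2$), $P_k\#=\prod_{i=1}^kP_i$. $S_k=\{N\in\mathbb{N}:5\le N\le4+P_k\#\}$, $S_k^{(m)}=\{N:5+mP_{k-1}\#\le N\le4+(m+1)P_{k-1}\#\}$ for $0\le m\le P_k-1$. A prospective prime in $S_k$ is an $N\in S_k$ coprime to $P_k\#$; prospective primes $a<b$ in $S_k$ are consecutive if no integer strictly between them is coprime to $P_k\#$; a consecutive prospective prime pair with gap $g$ is a pair $(a,a+g)$ of consecutive prospective primes. For $j>l$, $\mathring{n}^g_j=\prod_{i=l+1}^{j}(P_i-2)\prod_{l+1\le i\le j,\,P_i\mid g}\frac{P_i-1}{P_i-2}$. *)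

From mathcomp Require Import all_boot all_order all_algebra.
Set Implicit Arguments. Unset Strict Implicit. Unset Printing Implicit Defensive.
Import Order.TTheory GRing.Theory Num.Theory.

Lemma exists_prime_above (m : nat) : exists p, (m < p) && prime p.
Proof. by case: (prime_above m) => p H1 H2; exists p; rewrite H1 H2. Qed.

Definition next_prime (m : nat) : nat := ex_minn (exists_prime_above m).

(* P k = k-th prime, P 1 = 2 (P 0 = 1, unused) *)
Definition P (k : nat) : nat := iter k next_prime 1.

Definition primorial (k : nat) : nat := \prod_(1 <= i < k.+1) P i.

Definition prospective (k N : nat) : bool :=
  (5 <= N <= 4 + primorial k) && coprime N (primorial k).

Definition consecutive_pp (k a b : nat) : Prop :=
  [/\ a < b, prospective k a, prospective k b &
      forall n, a < n < b -> ~~ coprime n (primorial k)].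

Definition cpp_pair (k g a : nat) : Prop := consecutive_pp k a (a + g).

Definition nring (l g j : nat) : rat :=
  (\prod_(l.+1 <= i < j.+1) ((P i)%:R - 2))
  * \prod_(l.+1 <= i < j.+1 | P i %| g) (((P i)%:R - 1) / ((P i)%:R - 2)).

(* The tuple is t : 'I_(k-l) -> 'I_(P k)
   with t i standing for m_{l+1+i}. *)
Definition derived_count (l k g a m m' : nat) : nat :=
  #|[set t : {ffun 'I_(k - l) -> 'I_(P k)} |
     [&& [forall i : 'I_(k - l), t i < P (l.+1 + i)],
         [forall i : 'I_(k - l), (l.+1 + i == k.-1) ==> (t i == m :> nat)],
         [forall i : 'I_(k - l), (l.+1 + i == k) ==> (t i == m' :> nat)],
         coprime (a + \sum_(i < k - l) t i * primorial (l + i)) (primorial k) &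
         coprime (a + g + \sum_(i < k - l) t i * primorial (l + i)) (primorial k)]]|.

From mathcomp Require Import all_boot all_order all_algebra.
From mathcomp Require Import zify lra.
Import Order.TTheory GRing.Theory Num.Theory.

(** The admissible tuples are counted digit by digit, from m_{l+1} upwards.
    The digit m_j has weight P_{j-1}#, which is invertible modulo P_j, so as
    m_j runs over [0, P_j) the numbers a + M and a + g + M run through all
    residues modulo P_j; at most two values of m_j (one if P_j divides g)
    make one of them divisible by P_j, while coprimality with P_{j-1}# is
    unaffected.  Each free digit below m_{k-2} thus contributes a factor
    P_j - 2 or P_j - 1.  Since m_{k-1} and m_k are pinned, the three primes
    P_{k-2}, P_{k-1}, P_k all have to be sieved out with the single digit
    m_{k-2}, each excluding at most two of its P_{k-2} values. *)

Lemma next_primeP m : m < next_prime m /\ prime (next_prime m).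
Proof. by rewrite /next_prime; case: ex_minnP => p /andP[]. Qed.

Lemma PS i : P i.+1 = next_prime (P i).
Proof. exact: iterS. Qed.

Lemma P_prime {i} : 0 < i -> prime (P i).
Proof. by case: i => // i _; rewrite PS; case: (next_primeP (P i)). Qed.

Lemma P_ltS i : P i < P i.+1.
Proof. by rewrite PS; case: (next_primeP (P i)). Qed.

Lemma P_lt {i j} : i < j -> P i < P j.
Proof. exact: (homo_ltn ltn_trans P_ltS). Qed.

Lemma P_le {i j} : i <= j -> P i <= P j.
Proof. exact: (homo_leq leqnn leq_trans (fun i => ltnW (P_ltS i))). Qed.

Lemma P_gt0 i : 0 < P i.
Proof. exact: P_le (leq0n i). Qed.

Lemma P_ge3 i : 1 < i -> 2 < P i.
Proof. by move=> /P_le; have := P_ltS 0; have := P_ltS 1; rewrite /= /P /=; lia. Qed.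

Lemma primorialS j : primorial j.+1 = primorial j * P j.+1.
Proof. exact: big_nat_recr. Qed.

Lemma primorial_dvd {i j} : i <= j -> primorial i %| primorial j.
Proof.
apply: (homo_leq (r := dvdn)) => // [n d m|n]; first exact: dvdn_trans.
by rewrite primorialS dvdn_mulr.
Qed.

Lemma P_ndvd_primorial {i j} : j < i -> ~~ (P i %| primorial j).
Proof.
move=> lt_ji; have Pi : prime (P i) by apply: P_prime; case: i lt_ji.
elim: j lt_ji => [_ | j IHj lt_ji].
  by rewrite /primorial big_geq // dvdn1 neq_ltn prime_gt1 ?orbT.
rewrite primorialS Euclid_dvdM // negb_or IHj 1?ltnW //.
by rewrite (dvdn_prime2 Pi (P_prime (ltn0Sn j))) neq_ltn (P_lt lt_ji) orbT.
Qed.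

Lemma coprime_primorialS x j :
  coprime x (primorial j.+1) = coprime x (primorial j) && ~~ (P j.+1 %| x).
Proof.
by rewrite primorialS coprimeMr [coprime x (P _)]coprime_sym (prime_coprime _ (P_prime _)).
Qed.

Lemma coprime_addr_dvd {q v} x : q %| v -> coprime (x + v) q = coprime x q.
Proof. by move=> /dvdnP[e ->]; rewrite -coprime_modl addnC modnMDl coprime_modl. Qed.

Lemma sum_dvdn_affine_le1 {p w n} c : prime p -> n <= p -> ~~ (p %| w) ->
  \sum_(d < n) (p %| c + d * w) <= 1.
Proof.
move=> p_pr le_np p_w; rewrite -big_mkcondr sum1_card.
apply/card_le1_eqP => d e; rewrite !unfold_in => p_d p_e; apply: ord_inj.
wlog le_de : d e p_d p_e / d <= e.
  by move=> H; case: (leqP d e) => [|/ltnW] /H ->.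
have : p %| (e - d) * w by rewrite mulnBl -(subnDl c) dvdn_sub.
rewrite Euclid_dvdM // (negbTE p_w) orbF => /dvdn_leq.
by have := ltn_ord e; lia.
Qed.

Lemma sum_andbN_ge {n} (A b : 'I_n -> bool) : \sum_(d < n) b d <= 1 ->
  \sum_(d < n) A d <= \sum_(d < n) (A d && ~~ b d) + 1.
Proof.
move=> le1; apply: leq_trans (leq_add (leqnn _) le1); rewrite -big_split.
by apply: leq_sum => d _; case: (A d); case: (b d).
Qed.

Lemma sum_andbNN_ge {n} (A b b' : 'I_n -> bool) :
  \sum_(d < n) b d <= 1 -> \sum_(d < n) b' d <= 1 ->
  \sum_(d < n) A d <= \sum_(d < n) (A d && ~~ b d && ~~ b' d) + 2.
Proof.
move=> le1 le1'; have := sum_andbN_ge A b le1.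
by have := sum_andbN_ge (fun d => A d && ~~ b d) b' le1'; lia.
Qed.

Section CoprimePair.
Variables a g : nat.

Definition coprime_pair j x :=
  coprime (a + x) (primorial j) && coprime (a + g + x) (primorial j).

Definition pair_excluded p := if p %| g then 1 else 2.

Lemma pair_excluded_le2 p : pair_excluded p <= 2.
Proof. by rewrite /pair_excluded; case: ifP. Qed.

Lemma coprime_pairS j x : coprime_pair j.+1 x =
  [&& coprime_pair j x, ~~ (P j.+1 %| a + x) & ~~ (P j.+1 %| a + g + x)].
Proof. by rewrite /coprime_pair !coprime_primorialS -!andbA; do !bool_congr. Qed.

Lemma coprime_pair_shift j x v :
  primorial j %| v -> coprime_pair j (x + v) = coprime_pair j x.
Proof. by move=> dv; rewrite /coprime_pair !addnA !(coprime_addr_dvd _ dv). Qed.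

Lemma sum_coprime_pairS {j n w} c : n <= P j.+1 -> ~~ (P j.+1 %| w) ->
  \sum_(d < n) coprime_pair j (c + d * w)
    <= \sum_(d < n) coprime_pair j.+1 (c + d * w) + pair_excluded (P j.+1).
Proof.
move=> le_n p_w; have p_pr : prime (P j.+1) by apply: P_prime.
have le1 c' := sum_dvdn_affine_le1 c' p_pr le_n p_w.
under [X in _ <= X + _]eq_bigr do rewrite coprime_pairS !addnA.
rewrite /pair_excluded; case: ifP => [p_g | _].
  under eq_bigr do rewrite (addnAC a g) (addnAC (a + c) g) (dvdn_addl _ p_g) andbb.
  exact: sum_andbN_ge _ _ (le1 (a + c)).
under eq_bigr do rewrite andbA.
exact: sum_andbNN_ge _ _ _ (le1 (a + c)) (le1 (a + g + c)).
Qed.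

Lemma pair_sieve_step j M : coprime_pair j M ->
  P j.+1 - pair_excluded (P j.+1)
    <= \sum_(d < P j.+1) coprime_pair j.+1 (M + d * primorial j).
Proof.
move=> pair_M; have := sum_coprime_pairS M (leqnn _) (P_ndvd_primorial (ltnSn j)).
under eq_bigr do rewrite coprime_pair_shift ?dvdn_mull // pair_M.
by rewrite sum_nat_const card_ord muln1 leq_subLR addnC.
Qed.

Lemma pair_sieve_many q r n c : n <= P q.+1 -> coprime_pair q c ->
  n - 2 * r <= \sum_(d < n) coprime_pair (q + r) (c + d * primorial q).
Proof.
move=> le_n pair_c; elim: r => [|r IHr].
  under eq_bigr do rewrite addn0 coprime_pair_shift ?dvdn_mull // pair_c.
  by rewrite sum_nat_const card_ord muln1 leq_subr.
have le_n' : n <= P (q + r).+1 by apply: leq_trans le_n (P_le _); lia.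
have p_w : ~~ (P (q + r).+1 %| primorial q) by apply: P_ndvd_primorial; lia.
have := sum_coprime_pairS c le_n' p_w; have := pair_excluded_le2 (P (q + r).+1).
by rewrite addnS; lia.
Qed.

End CoprimePair.

Section FfunRcons.
Context {T : finType}.

Definition ffun_rcons {n} (t : {ffun 'I_n -> T}) (x : T) : {ffun 'I_n.+1 -> T} :=
  [ffun i => if unlift ord_max i is Some j then t j else x].

Lemma ffun_rcons_lift n t x (j : 'I_n) : ffun_rcons t x (lift ord_max j) = t j.
Proof. by rewrite ffunE liftK. Qed.

Lemma ffun_rcons_max n t x : ffun_rcons t x (@ord_max n) = x.
Proof. by rewrite ffunE unlift_none. Qed.

Lemma sum_ffunS n (F : {ffun 'I_n.+1 -> T} -> nat) :
  \sum_t F t = \sum_(t : {ffun 'I_n -> T}) \sum_x F (ffun_rcons t x).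
Proof.
rewrite pair_bigA (reindex (fun p => ffun_rcons p.1 p.2)) //=.
exists (fun t => ([ffun j => t (lift ord_max j)], t ord_max)) => [[t x] _ | t _].
  by rewrite ffun_rcons_max; congr pair; apply/ffunP => j; rewrite ffunE ffun_rcons_lift.
by apply/ffunP => i; rewrite ffunE; case: unliftP => [j ->|->]; rewrite ?ffunE.
Qed.

Lemma forall_ffun_rcons (Q : nat -> T -> bool) n t x :
  [forall i : 'I_n.+1, Q i (ffun_rcons t x i)] = [forall i : 'I_n, Q i (t i)] && Q n x.
Proof.
apply/forallP/andP => [Qt | [/forallP Qt Qx] i].
  split; last by have := Qt ord_max; rewrite ffun_rcons_max.
  by apply/forallP => j; have := Qt (lift ord_max j); rewrite ffun_rcons_lift lift_max.
case: (unliftP ord_max i) => [j ->|->]; last by rewrite ffun_rcons_max.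
by rewrite ffun_rcons_lift lift_max.
Qed.

Lemma sum_ffun_rcons (F : nat -> T -> nat) n t x :
  \sum_(i < n.+1) F i (ffun_rcons t x i) = \sum_(i < n) F i (t i) + F n x.
Proof.
rewrite big_ord_recr /= ffun_rcons_max; congr (_ + _); apply: eq_bigr => i _.
rewrite (_ : widen_ord _ i = lift ord_max i) ?ffun_rcons_lift //.
exact/val_inj/esym/lift_max.
Qed.

End FfunRcons.

Section AdmissibleSum.
Variables (N : nat) (B : nat -> pred nat) (w : nat -> nat).

Definition admissible_sum n (f : nat -> nat) :=
  \sum_(t : {ffun 'I_n -> 'I_N} | [forall i : 'I_n, B i (t i)])
    f (\sum_(i < n) t i * w i).

Lemma admissible_sum0 f : admissible_sum 0 f = f 0.
Proof.
rewrite /admissible_sum (eq_bigl xpredT) => [|t]; last by apply/forallP => -[].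
rewrite (eq_bigr (fun=> f 0)) => [|t _]; last by rewrite big_ord0.
by rewrite sum_nat_const card_ffun !card_ord mul1n.
Qed.

Lemma admissible_sumS n f : admissible_sum n.+1 f =
  admissible_sum n (fun M => \sum_(d < N | B n d) f (M + d * w n)).
Proof.
rewrite /admissible_sum big_mkcond sum_ffunS [RHS]big_mkcond; apply: eq_bigr => t _ /=.
case: ifP => Bt; [rewrite [RHS]big_mkcond; apply: eq_bigr | apply: big1] => x _;
  by rewrite (forall_ffun_rcons (fun i (d : 'I_N) => B i d))
             (sum_ffun_rcons (fun i (d : 'I_N) => d * w i)) Bt.
Qed.

Lemma admissible_sum_le n f h :
  (forall M, f M <= h M) -> admissible_sum n f <= admissible_sum n h.
Proof. by move=> le_fh; apply: leq_sum => t _. Qed.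

Lemma admissible_sumMr n f c :
  admissible_sum n (fun M => f M * c) = admissible_sum n f * c.
Proof. by rewrite /admissible_sum big_distrl. Qed.

End AdmissibleSum.

Definition pair_count g l j :=
  \prod_(l.+1 <= i < j.+1) (P i - pair_excluded g (P i)).

Section DerivedCount.
Variables g l a k m m' : nat.

Definition digit_ok i d :=
  [&& d < P (l.+1 + i), (l.+1 + i == k.-1) ==> (d == m) & (l.+1 + i == k) ==> (d == m')].

Local Notation digit_sum := (admissible_sum (P k) digit_ok (fun i => primorial (l + i))).

Lemma derived_count_digit_sum :
  derived_count l k g a m m' = digit_sum (k - l) (coprime_pair a g k).
Proof.
rewrite /derived_count /admissible_sum -sum1_card big_mkcond [RHS]big_mkcond.
apply: eq_bigr => t _; rewrite inE /coprime_pair.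
have -> : [forall i : 'I_(k - l), digit_ok i (t i)] =
    [&& [forall i : 'I_(k - l), t i < P (l.+1 + i)],
        [forall i : 'I_(k - l), (l.+1 + i == k.-1) ==> (t i == m :> nat)]
      & [forall i : 'I_(k - l), (l.+1 + i == k) ==> (t i == m' :> nat)]].
  apply/forallP/and3P => [ok | [/forallP ok1 /forallP ok2 /forallP ok3] i].
    by split; apply/forallP => i; case/and3P: (ok i).
  by rewrite /digit_ok ok1 ok2 ok3.
by case: [forall i, _ < _]; case: [forall i, _ ==> (_ == m)];
   case: [forall i, _ ==> (_ == m')]; case: coprime; case: coprime.
Qed.

Lemma sum_digit_free i (F : nat -> nat) : l.+1 + i < k.-1 ->
  \sum_(d < P k | digit_ok i d) F d = \sum_(d < P (l.+1 + i)) F d.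
Proof.
move=> lt_i; have le_P : P (l.+1 + i) <= P k by apply: P_le; lia.
rewrite (big_ord_widen _ F le_P); apply: eq_bigl => d; rewrite /digit_ok.
rewrite (_ : (l.+1 + i == k.-1) = false) 1?(_ : (l.+1 + i == k) = false) ?andbT //;
  lia.
Qed.

Lemma digit_ok_penult i d : l.+1 + i = k.-1 -> m < P k.-1 -> digit_ok i d = (d == m).
Proof.
move=> def_i lt_m; rewrite /digit_ok def_i eqxx (_ : (k.-1 == k) = false) //; last by lia.
by rewrite /= andbT; case: eqP => [-> | _]; rewrite ?lt_m ?andbF.
Qed.

Lemma digit_ok_last i d : l.+1 + i = k -> m' < P k -> digit_ok i d = (d == m').
Proof.
move=> def_i lt_m'; rewrite /digit_ok def_i eqxx (_ : (k == k.-1) = false) //; last by lia.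
by rewrite /=; case: eqP => [-> | _]; rewrite ?lt_m' ?andbF.
Qed.

Lemma digit_sum_lower j : l + j <= k - 3 -> coprime_pair a g l 0 ->
  pair_count g l (l + j) <= digit_sum j (coprime_pair a g (l + j)).
Proof.
move=> le_j pair0; elim: j le_j => [_ | j IHj le_j].
  by rewrite admissible_sum0 addn0 pair0 /pair_count big_geq.
rewrite addnS /pair_count big_nat_recr -/(pair_count g l (l + j)); last by lia.
rewrite admissible_sumS; apply: leq_trans (leq_mul (IHj _) (leqnn _)) _; first by lia.
rewrite -admissible_sumMr; apply: admissible_sum_le => M.
case pair_M: (coprime_pair a g (l + j) M); last by rewrite mul0n.
rewrite mul1n (sum_digit_free _ (fun d => coprime_pair a g _ (M + d * _))) -?addSn;
  last by lia.
exact: pair_sieve_step.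
Qed.

Lemma derived_count_lower : l + 3 <= k -> m < P k.-1 -> m' < P k ->
  coprime_pair a g l 0 ->
  (P (k - 2) - 6) * pair_count g l (k - 3) <= derived_count l k g a m m'.
Proof.
move=> le_lk lt_m lt_m' pair0; set q := k - 3.
have [j0 def_j0] : {j0 | k - l = j0.+3 /\ q = l + j0} by exists (k - l - 3); lia.
rewrite derived_count_digit_sum def_j0.1 !admissible_sumS.
apply: leq_trans (_ : _ <= digit_sum j0 (fun M => coprime_pair a g q M * (P q.+1 - 6))) _.
  rewrite admissible_sumMr mulnC (_ : k - 2 = q.+1) ?leq_mul2r; last by lia.
  by rewrite def_j0.2 digit_sum_lower ?orbT //; lia.
apply: admissible_sum_le => M; case pair_M: (coprime_pair a g q M); last by rewrite mul0n.
set u := m * primorial (l + j0.+1) + m' * primorial (l + j0.+2).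
have pair_Mu : coprime_pair a g q (M + u).
  by rewrite coprime_pair_shift // dvdn_add // dvdn_mull // primorial_dvd //; lia.
have pinned d : \sum_(d' < P k | digit_ok j0.+1 d') \sum_(d'' < P k | digit_ok j0.+2 d'')
      coprime_pair a g k (M + d * primorial (l + j0) + d' * primorial (l + j0.+1)
                            + d'' * primorial (l + j0.+2))
    = coprime_pair a g (q + 3) (M + u + d * primorial q).
  have lt_mk : m < P k by apply: leq_trans lt_m (P_le _); lia.
  rewrite (big_pred1 (Ordinal lt_mk)) => [|d']; last first.
    by rewrite digit_ok_penult //; lia.
  rewrite (big_pred1 (Ordinal lt_m')) => [|d'']; last first.
    by rewrite digit_ok_last //; lia.
  rewrite /u def_j0.2 (_ : l + j0 + 3 = k); last by lia.
  by congr coprime_pair => /=; lia.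
rewrite mul1n; under eq_bigr => d _ do rewrite pinned.
rewrite (sum_digit_free _ (fun d => coprime_pair a g (q + 3) (M + u + d * primorial q)));
  last by lia.
by rewrite (_ : l.+1 + j0 = q.+1); [exact: pair_sieve_many | lia].
Qed.

End DerivedCount.

Local Open Scope ring_scope.

Lemma nring_pair_count l g j : (0 < l)%N -> nring l g j = (pair_count g l j)%:R.
Proof.
move=> l_gt0; rewrite /nring /pair_count natr_prod (big_mkcond (fun i => P i %| g)%N).
rewrite -big_split /=; apply: eq_big_nat => i /andP[lt_li _].
have P_ge3 : (3 <= P i)%N by apply: P_ge3; lia.
have P2_neq0 : (P i)%:R - 2 != 0 :> rat.
  have : 3%:R <= (P i)%:R :> rat by rewrite ler_nat.
  by move=> ?; apply/eqP; lra.
rewrite /pair_excluded; case: ifP => _; last by rewrite mulr1 natrB //; lia.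
by rewrite mulrC divfK // natrB //; lia.
Qed.

Theorem lemma6 (g l a k m m' : nat) :
  (0 < g)%N -> (1 <= l)%N -> cpp_pair l g a ->
  (l + 4 < k)%N -> (m <= P k.-1 - 1)%N -> (m' <= P k - 1)%N ->
  ((P (k - 2))%:R - 6) * nring l g (k - 3) <= (derived_count l k g a m m')%:R :> rat.
Proof.
move=> _ l_gt0 [_ /andP[_ cop_a] /andP[_ cop_ag] _] lt_lk le_m le_m'.
have pair0 : coprime_pair a g l 0 by rewrite /coprime_pair !addn0 cop_a cop_ag.
have lt_m : (m < P k.-1)%N by have := P_gt0 k.-1; lia.
have lt_m' : (m' < P k)%N by have := P_gt0 k; lia.
have le_lk : (l + 3 <= k)%N by lia.
have := derived_count_lower g l a k m m' le_lk lt_m lt_m' pair0; rewrite -(ler_nat rat).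
apply: le_trans; rewrite nring_pair_count // natrM ler_wpM2r //.
case: (leqP 6 (P (k - 2))) => [le6 | lt6]; first by rewrite natrB.
by rewrite (_ : P (k - 2) - 6 = 0)%N 1?subr_le0 ?ler_nat; lia.
Qed.
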